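(* Let $V$ be a finite-dimensional irreducible $\mathcal U$-module. Then there exist nonzero scalars $\varepsilon_0,\varepsilon_1\in\mathbb K$, a nonnegative integer $d$, and a decomposition $U_0,\dots,U_d$ of $V$ such that $(k_0-\varepsilon_0q^{2i-d}I)U_i=0$ and $(k_1-\varepsilon_1q^{d-2i}I)U_i=0$ for $0\le i\le d$. The sequence $\varepsilon_0,\varepsilon_1;U_0,\dots,U_d$ is unique. Moreover, with $U_{-1}=U_{d+1}=0$, for $0\le i\le d$: $(\varepsilon_0y^+_0-q^{d-2i}I)U_i\subseteq U_{i+1}$, $(\varepsilon_1y^-_1-q^{2i-d}I)U_i\subseteq U_{i+1}$, $(\varepsilon_0y^-_0-q^{d-2i}I)U_i\subseteq U_{i-1}$, $(\varepsilon_1y^+_1-q^{2i-d}I)U_i\subseteq U_{i-1}$.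
   Context: $\mathbb K$ is an algebraically closed field, $q\in\mathbb K$ nonzero and not a root of unity, $[3]_q=\frac{q^3-q^{-3}}{q-q^{-1}}$. $\mathcal U$ (isomorphic to $U_q(\widehat{sl}_2)$) is the unital associative $\mathbb K$-algebra with generators $y^{\pm}_i,k_i^{\pm1}$ ($i\in\{0,1\}$) and relations: $k_ik_i^{-1}=k_i^{-1}k_i=1$; $k_0k_1$ central; $\frac{qy^+_ik_i-q^{-1}k_iy^+_i}{q-q^{-1}}=1$; $\frac{qk_iy^-_i-q^{-1}y^-_ik_i}{q-q^{-1}}=1$; $\frac{qy^-_iy^+_i-q^{-1}y^+_iy^-_i}{q-q^{-1}}=1$; $\frac{qy^+_iy^-_j-q^{-1}y^-_jy^+_i}{q-q^{-1}}=k_0^{-1}k_1^{-1}$ ($i\ne j$); $(y^{\pm}_i)^3y^{\pm}_j-[3]_q(y^{\pm}_i)^2y^{\pm}_jy^{\pm}_i+[3]_qy^{\pm}_iy^{\pm}_j(y^{\pm}_i)^2-y^{\pm}_j(y^{\pm}_i)^3=0$ ($i\ne j$). A decomposition of $V$ is a sequence $U_0,\dots,U_d$ of nonzero subspaces with $V=U_0+\cdots+U_d$ a direct sum. Irreducible modules are nonzero by convention. *)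

From HB Require Import structures.
From mathcomp Require Import all_boot all_order all_algebra.
Set Implicit Arguments. Unset Strict Implicit. Unset Printing Implicit Defensive.
Import Order.TTheory GRing.Theory Num.Theory.
Local Open Scope ring_scope.

(* Index convention: generators indexed by i : bool, with false = 0, true = 1.
   The "other" index j <> i is ~~ i. *)

Definition not_root_of_unity (K : fieldType) (q : K) : Prop :=
  forall n : nat, (0 < n)%N -> q ^+ n != 1.

Definition qint3 (K : fieldType) (q : K) : K :=
  (q ^+ 3 - q ^- 3) / (q - q^-1).

Local Open Scope lfun_scope.

(* The linear maps yp i, ym i, k i, kinv i on the finite-dimensional K-space V
   (actions of y^+_i, y^-_i, k_i, k_i^{-1}) satisfy the defining relations of U. *)
Definition is_U_module (K : fieldType) (V : vectType K) (q : K)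
  (yp ym k kinv : bool -> 'End(V)) : Prop :=
  let gens := [:: yp false; yp true; ym false; ym true;
                  k false; k true; kinv false; kinv true] in
      (forall i v, k i (kinv i v) = v /\ kinv i (k i v) = v) /\
      (forall g, g \in gens -> forall v, k false (k true (g v)) = g (k false (k true v))) /\
      (forall i v, (q - q^-1)^-1 *: (q *: yp i (k i v) - q^-1 *: k i (yp i v)) = v) /\
      (forall i v, (q - q^-1)^-1 *: (q *: k i (ym i v) - q^-1 *: ym i (k i v)) = v) /\
      (forall i v, (q - q^-1)^-1 *: (q *: ym i (yp i v) - q^-1 *: yp i (ym i v)) = v) /\
      (forall i v, (q - q^-1)^-1 *: (q *: yp i (ym (~~ i) v) - q^-1 *: ym (~~ i) (yp i v))
                  = kinv false (kinv true v)) /\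
      (forall (y : bool -> 'End(V)), (y = yp \/ y = ym) -> forall i v,
        let j := ~~ i in
        y i (y i (y i (y j v))) - qint3 q *: y i (y i (y j (y i v)))
        + qint3 q *: y i (y j (y i (y i v))) - y j (y i (y i (y i v))) = 0).

Definition U_irreducible (K : fieldType) (V : vectType K)
  (yp ym k kinv : bool -> 'End(V)) : Prop :=
  (fullv : {vspace V}) != 0%VS /\
  forall W : {vspace V},
    (forall i v, v \in W ->
       [/\ yp i v \in W, ym i v \in W, k i v \in W & kinv i v \in W]) ->
    W = 0%VS \/ W = fullv.

Definition is_decomposition (K : fieldType) (V : vectType K) (d : nat)
  (U : nat -> {vspace V}) : Prop :=
  [/\ forall i, (i <= d)%N -> U i != 0%VS,
      (\sum_(i < d.+1) U i)%VS = fullv &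
      directv (\sum_(i < d.+1) U i)%VS].

Definition weight_condition (K : fieldType) (V : vectType K) (q : K)
  (k : bool -> 'End(V)) (e0 e1 : K) (d : nat) (U : nat -> {vspace V}) : Prop :=
  forall i, (i <= d)%N -> forall v, v \in U i ->
    k false v - (e0 * q ^ (2 * (i%:Z) - d%:Z)) *: v = 0 /\
    k true v - (e1 * q ^ (d%:Z - 2 * (i%:Z))) *: v = 0.

Definition Unext (K : fieldType) (V : vectType K) (d : nat)
  (U : nat -> {vspace V}) (i : nat) : {vspace V} :=
  if (i < d)%N then U i.+1 else 0%VS.
Definition Uprev (K : fieldType) (V : vectType K)
  (U : nat -> {vspace V}) (i : nat) : {vspace V} :=
  if i is j.+1 then U j else 0%VS.

(* By Schur's lemma the central element k0 k1 acts as a scalar c != 0.  The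
   relations between y^{+-}_i and k_i show that if k_i v = mu v, then
   y^+_i v - mu^-1 v and y^-_i v - mu^-1 v are k_i-eigenvectors for mu q^2 and
   mu q^-2 (or zero).  Since q is not a root of unity, the finitely many
   eigenvalues of k0 contain a string b, b q^2, ..., b q^(2d) that cannot be
   prolonged at either end.  The sum of the corresponding eigenspaces U_i is
   direct and, by the shift property, stable under all generators, hence equal
   to V; then e0 = b q^d and e1 = c / e0.  Conversely the U_i of any such
   decomposition are the eigenspaces of k0 and its eigenvalues are exactly the
   b q^(2i), which forces uniqueness. *)

From HB Require Import structures.
From mathcomp Require Import all_boot all_order all_algebra.
From mathcomp Require Import ring.
Set Implicit Arguments. Unset Strict Implicit. Unset Printing Implicit Defensive.
Import Order.TTheory GRing.Theory Num.Theory passmx.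
Local Open Scope ring_scope.

Section Eigenspaces.
Variables (K : fieldType) (V : vectType K) (f : 'End(V)).

Lemma mem_leigenspace a v : (v \in leigenspace f a) = (f v == a *: v).
Proof. by rewrite memv_ker add_lfunE opp_lfunE scale_lfunE id_lfunE subr_eq0. Qed.

Lemma leigenvalue_unique a b v :
  v != 0 -> v \in leigenspace f a -> v \in leigenspace f b -> a = b.
Proof.
move=> v_neq0; rewrite !mem_leigenspace => /eqP-> /eqP /esym /eqP.
by rewrite -subr_eq0 -scalerBl scaler_eq0 subr_eq0 (negPf v_neq0) orbF => /eqP.
Qed.

Lemma leigenvector_eq0 a v : ~~ leigenvalue f a -> v \in leigenspace f a -> v = 0.
Proof. by rewrite negbK => /eqP->; rewrite memv0 => /eqP. Qed.

Lemma leigenspace_stable (g : 'End(V)) a v :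
  (forall x, f (g x) = g (f x)) -> v \in leigenspace f a -> g v \in leigenspace f a.
Proof. by move=> fg; rewrite !mem_leigenspace fg => /eqP->; rewrite linearZ. Qed.

Lemma leigenvectors_sum_eq0 (I : eqType) (r : seq I) (a : I -> K) (u : I -> V) :
    uniq (map a r) -> (forall i, i \in r -> u i \in leigenspace f (a i)) ->
  \sum_(i <- r) u i = 0 -> forall i, i \in r -> u i = 0.
Proof.
elim: r u => [//|i r IHr] u /= /andP[ar_i uniq_ar] eig_u.
rewrite big_cons => sum_u0.
have eig_r j : j \in r -> f (u j) = a j *: u j.
  by move=> rj; apply/eqP; rewrite -mem_leigenspace eig_u // inE rj orbT.
have ur0 j : j \in r -> u j = 0.
  move=> rj; have: (a j - a i) *: u j = 0.
    apply: (IHr (fun j => (a j - a i) *: u j)) => // [l rl|].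
      by rewrite memvZ // mem_leigenspace eig_r.
    have := congr1 (fun x => f x - a i *: x) sum_u0.
    rewrite /= linear0 scaler0 subrr linearD linear_sum /= scalerDr scaler_sumr.
    have /eqP-> : f (u i) == a i *: u i by rewrite -mem_leigenspace eig_u ?mem_head.
    rewrite opprD addrACA subrr add0r -sumrB.
    move=> sum0; rewrite -[RHS]sum0.
    by apply: eq_big_seq => l rl; rewrite eig_r // scalerBl.
  move/eqP; rewrite scaler_eq0 subr_eq0 => /orP[/eqP aji|/eqP //].
  by move: ar_i; rewrite -aji map_f.
move=> j; rewrite inE => /orP[/eqP->|]; last exact: ur0.
by move: sum_u0; rewrite big_seq big1 ?addr0 // => l /ur0.
Qed.

Lemma directv_sum_leigenspace (I : finType) (a : I -> K) :
  injective a -> directv (\sum_i leigenspace f (a i)).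
Proof.
move=> a_inj; apply/directv_sum_independent => u eig_u sum_u0 i _.
apply: (@leigenvectors_sum_eq0 I (index_enum I) a) => //.
  by rewrite map_inj_uniq // index_enum_uniq.
by move=> j _; apply: eig_u.
Qed.

Lemma leigenvalue_finite (a : nat -> K) :
  injective a -> exists n, ~~ leigenvalue f (a n).
Proof.
move=> a_inj; pose m := \dim {:V}.
have [/existsP[i not_eig]|/existsPn all_eig] :=
  boolP [exists i : 'I_m.+1, ~~ leigenvalue f (a i)]; first by exists i.
have /directvP/= dim_sum := @directv_sum_leigenspace 'I_m.+1 (fun i => a i)
  (fun i j eq_ij => val_inj (a_inj i j eq_ij)).
suff: (m.+1 <= m)%N by rewrite ltnn.
apply: leq_trans (dimvS (subvf (\sum_(i < m.+1) leigenspace f (a i)))); rewrite dim_sum.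
rewrite -[X in (X <= _)%N]card_ord -sum1_card; apply: leq_sum => i _.
by rewrite lt0n dimv_eq0; have := all_eig i; rewrite negbK.
Qed.

Lemma leigenvalue_string (a : nat -> K) : injective a -> leigenvalue f (a 0) ->
  exists n, (forall i, (i <= n)%N -> leigenvalue f (a i)) /\ ~~ leigenvalue f (a n.+1).
Proof.
move=> a_inj eig0; have [m not_eig_m min_m] := ex_minnP (leigenvalue_finite a_inj).
case: m not_eig_m min_m => [|n] not_eig_n min_n; first by rewrite eig0 in not_eig_n.
exists n; split=> // i le_in.
by apply: contraT => /min_n; rewrite ltnNge le_in.
Qed.

Lemma leigenspace_sum_decomposition (I : finType) (D : I -> {vspace V}) (lam : I -> K) a :
    (\sum_i D i)%VS = fullv -> directv (\sum_i D i) ->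
    (forall i, D i <= leigenspace f (lam i))%VS ->
  leigenspace f a = (\sum_(i | lam i == a) D i)%VS.
Proof.
move=> sum_full dir_sum D_eig; apply/vspaceP => v; apply/idP/idP => [eig_v|]; last first.
  by apply/subvP/subv_sumP => i /eqP <-.
have /memv_sumP[vs D_vs def_v] : v \in (\sum_i D i)%VS by rewrite sum_full memvf.
have f_vs i : f (vs i) = lam i *: vs i.
  by apply/eqP; rewrite -mem_leigenspace (subvP (D_eig i)) ?D_vs.
have vs0 : forall i, true -> (lam i - a) *: vs i = 0.
  move/directv_sum_independent : dir_sum; apply=> [i _|]; first by rewrite memvZ ?D_vs.
  move: eig_v; rewrite def_v mem_leigenspace linear_sum /= scaler_sumr -subr_eq0 -sumrB.
  move=> /eqP sum0; rewrite -[RHS]sum0.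
  by apply: eq_bigr => i _; rewrite f_vs scalerBl.
rewrite def_v (bigID (fun i => lam i == a)) /= [X in _ + X]big1 ?addr0 => [|i].
  by apply: memv_sumr => i _; apply: D_vs.
by move/eqP: (vs0 i isT); rewrite scaler_eq0 subr_eq0 => /orP[->|/eqP].
Qed.

End Eigenspaces.

Section GeometricProgressions.
Variable K : fieldType.

Lemma not_root_of_unityV (s : K) : not_root_of_unity s -> not_root_of_unity s^-1.
Proof. by move=> s_nr n n_gt0; rewrite exprVn invr_eq1 s_nr. Qed.

Lemma not_root_of_unityX (s : K) n :
  (0 < n)%N -> not_root_of_unity s -> not_root_of_unity (s ^+ n).
Proof. by move=> n_gt0 s_nr m m_gt0; rewrite -exprM s_nr // muln_gt0 n_gt0. Qed.

Lemma subr_invr_neq0 (q : K) : q != 0 -> not_root_of_unity q -> q - q^-1 != 0.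
Proof.
move=> q_neq0 q_nr; rewrite subr_eq0; apply: contra (q_nr 2%N isT) => /eqP q_eq.
by rewrite expr2 {1}q_eq mulVf.
Qed.

Lemma geometric_inj (b s : K) : b != 0 -> s != 0 -> not_root_of_unity s ->
  injective (fun n => b * s ^+ n).
Proof.
move=> b_neq0 s_neq0 s_nr m n /(mulfI b_neq0).
wlog lt_mn : m n / (m < n)%N.
  move=> W; case: (ltngtP m n) => [/W //|lt_nm eq_mn|//].
  by rewrite (W n m lt_nm (esym eq_mn)).
rewrite -(subnKC (ltnW lt_mn)) exprD -{1}[s ^+ m]mulr1.
move=> /(mulfI (expf_neq0 _ s_neq0)) /esym /eqP.
by rewrite (negPf (s_nr _ _)) // subn_gt0.
Qed.

Lemma geometric_string_unique (b b' s : K) d d' :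
    b != 0 -> s != 0 -> not_root_of_unity s ->
    (forall a, (exists2 i, (i <= d)%N & a = b * s ^+ i) <->
               (exists2 i, (i <= d')%N & a = b' * s ^+ i)) ->
  b' = b /\ d' = d.
Proof.
move=> b_neq0 s_neq0 s_nr same.
have s_inj := geometric_inj b_neq0 s_neq0 s_nr.
have [i _ b_eq] := (same b).1 (ex_intro2 _ _ 0%N (leq0n d) (esym (mulr1 b))).
have [j _ b'_eq] := (same b').2 (ex_intro2 _ _ 0%N (leq0n d') (esym (mulr1 b'))).
have : (j + i = 0)%N by apply: s_inj; rewrite /= exprD mulrA -b'_eq -b_eq mulr1.
move/eqP; rewrite addn_eq0 => /andP[/eqP j0 _]; rewrite j0 mulr1 in b'_eq.
subst b'; split=> //.
have le_of m n : (forall a, (exists2 i, (i <= m)%N & a = b * s ^+ i) ->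
                            (exists2 i, (i <= n)%N & a = b * s ^+ i)) -> (m <= n)%N.
  by move=> sub; have [k le_kn /s_inj ->] := sub _ (ex_intro2 _ _ m (leqnn m) erefl).
by apply/eqP; rewrite eqn_leq !le_of // => a /same.
Qed.

Lemma expfzBn (x : K) m n : x != 0 -> x ^ (m%:Z - n%:Z) = x ^+ m / x ^+ n.
Proof. by move=> x_neq0; rewrite expfzDr // -exprnN. Qed.

End GeometricProgressions.

Section ClosedFieldEigenspaces.
Variables (K : closedFieldType) (V : vectType K) (f : 'End(V)).

Lemma leigenvalue_exists : {:V}%VS != 0%VS -> exists a, leigenvalue f a.
Proof.
move=> V_neq0; have V_basis := vbasisP {:V}.
have : size (char_poly (mxof (vbasis {:V}) (vbasis {:V}) f)) != 1%N.
  by rewrite size_char_poly eqSS dimv_eq0.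
case/closed_rootP => a; rewrite -eigenvalue_root_char => eig_a.
by exists a; rewrite /leigenvalue (leigenspaceE V_basis) vsof_eq0.
Qed.

Lemma lfun_scalar_of_trivial_leigenspaces : {:V}%VS != 0%VS ->
    (forall a, leigenspace f a = 0%VS \/ leigenspace f a = fullv) ->
  exists a, forall v, f v = a *: v.
Proof.
move=> V_neq0 trivial_eig; have [a eig_a] := leigenvalue_exists V_neq0.
exists a => v; apply/eqP; rewrite -mem_leigenspace.
by move: eig_a; rewrite /leigenvalue; case: (trivial_eig a) => ->; rewrite ?eqxx ?memvf.
Qed.

Lemma leigenvalue_maximal_string (s : K) :
    {:V}%VS != 0%VS -> ~~ leigenvalue f 0 -> s != 0 -> not_root_of_unity s ->
  exists b d, [/\ b != 0, forall i, (i <= d)%N -> leigenvalue f (b * s ^+ i),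
                  ~~ leigenvalue f (b / s) & ~~ leigenvalue f (b * s ^+ d.+1)].
Proof.
move=> V_neq0 not_eig0 s_neq0 s_nr; have [mu eig_mu] := leigenvalue_exists V_neq0.
have mu_neq0 : mu != 0 by apply: contraNneq not_eig0 => <-.
have [|m [eig_down not_down]] := leigenvalue_string (f := f)
  (geometric_inj mu_neq0 (invr_neq0 s_neq0) (not_root_of_unityV s_nr)).
  by rewrite /= mulr1.
set b := mu * s^-1 ^+ m; have b_neq0 : b != 0 by rewrite mulf_neq0 ?expf_neq0 ?invr_eq0.
have [|d [eig_up not_up]] := leigenvalue_string (f := f) (geometric_inj b_neq0 s_neq0 s_nr).
  by rewrite /= mulr1 eig_down.
by exists b, d; split; rewrite // /b -mulrA -exprSr.
Qed.

End ClosedFieldEigenspaces.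

Definition weight_space (K : fieldType) (V : vectType K) (q : K) (f : 'End(V))
  (b : K) (i : nat) : {vspace V} :=
  leigenspace f (b * (q ^+ 2) ^+ i).

Section WeightDecompositions.
Variables (K : fieldType) (q : K) (V : vectType K) (k : bool -> 'End(V)).
Hypotheses (q_neq0 : q != 0) (q_nr : not_root_of_unity q).
Let q2_neq0 : q ^+ 2 != 0 := expf_neq0 2 q_neq0.
Let q2_nr : not_root_of_unity (q ^+ 2) := not_root_of_unityX (n := 2) isT q_nr.

Lemma weight_conditionP e0 e1 d U :
  weight_condition q k e0 e1 d U <->
  (forall i, (i <= d)%N ->
     (U i <= leigenspace (k false) (e0 / q ^+ d * (q ^+ 2) ^+ i))%VS /\
     (U i <= leigenspace (k true) (e1 * q ^+ d / (q ^+ 2) ^+ i))%VS).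
Proof.
have expq i : q ^ (2 * i%:Z - d%:Z) = (q ^+ 2) ^+ i / q ^+ d /\
              q ^ (d%:Z - 2 * i%:Z) = q ^+ d / (q ^+ 2) ^+ i.
  by rewrite -PoszM !expfzBn // exprM.
have e0E i : e0 * ((q ^+ 2) ^+ i / q ^+ d) = e0 / q ^+ d * (q ^+ 2) ^+ i.
  by rewrite mulrA mulrAC.
split=> [wc i le_id | wc i le_id v Uv].
  have [ex0 ex1] := expq i; split; apply/subvP => v Uv; rewrite mem_leigenspace.
    by have [/eqP + _] := wc i le_id v Uv; rewrite subr_eq0 ex0 e0E.
  by have [_ /eqP] := wc i le_id v Uv; rewrite subr_eq0 ex1 mulrA.
have [/subvP k0U /subvP k1U] := wc i le_id; have [ex0 ex1] := expq i.
move: (k0U v Uv) (k1U v Uv); rewrite !mem_leigenspace => /eqP k0v /eqP k1v.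
by rewrite ex0 ex1 e0E k0v mulrA k1v !subrr.
Qed.

Lemma weight_decomposition_leigenspace e0 e1 d U :
    e0 != 0 -> is_decomposition d U -> weight_condition q k e0 e1 d U ->
  (forall i, (i <= d)%N -> U i = leigenspace (k false) (e0 / q ^+ d * (q ^+ 2) ^+ i)) /\
  (forall a, leigenvalue (k false) a <->
             exists2 i, (i <= d)%N & a = e0 / q ^+ d * (q ^+ 2) ^+ i).
Proof.
move=> e0_neq0 [U_neq0 sum_full dir_sum] /weight_conditionP wc.
have b_neq0 : e0 / q ^+ d != 0 by rewrite mulf_neq0 ?invr_eq0 ?expf_neq0.
have w_inj := geometric_inj b_neq0 q2_neq0 q2_nr.
have decomp a := leigenspace_sum_decomposition (D := fun i : 'I_d.+1 => U i)
  (lam := fun i : 'I_d.+1 => e0 / q ^+ d * (q ^+ 2) ^+ i) a sum_full dir_sum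
  (fun i => (wc i (ltn_ord i)).1).
have U_eig i : (i <= d)%N -> U i = leigenspace (k false) (e0 / q ^+ d * (q ^+ 2) ^+ i).
  move=> le_id; rewrite decomp (big_pred1 (Ordinal (le_id : (i < d.+1)%N))) // => j /=.
  by apply/eqP/eqP => [/w_inj ji|->]; first exact: val_inj.
split=> // a; split=> [|[i le_id ->]]; last by rewrite /leigenvalue -U_eig ?U_neq0.
rewrite /leigenvalue decomp.
have [i /eqP <-|none] := pickP (fun i : 'I_d.+1 => e0 / q ^+ d * (q ^+ 2) ^+ i == a).
  by exists i => //; rewrite -ltnS ltn_ord.
by rewrite big_pred0 ?eqxx.
Qed.

Lemma weight_decomposition_unique e0 e1 d U e0' e1' d' U' :
    e0 != 0 -> is_decomposition d U -> weight_condition q k e0 e1 d U ->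
    e0' != 0 -> is_decomposition d' U' -> weight_condition q k e0' e1' d' U' ->
  [/\ e0' = e0, e1' = e1, d' = d & forall i, (i <= d)%N -> U' i = U i].
Proof.
move=> e0_neq0 decU wU e0'_neq0 decU' wU'.
have [U_eig eigU] := weight_decomposition_leigenspace e0_neq0 decU wU.
have [U'_eig eigU'] := weight_decomposition_leigenspace e0'_neq0 decU' wU'.
have b_neq0 : e0 / q ^+ d != 0 by rewrite mulf_neq0 ?invr_eq0 ?expf_neq0.
have [b_eq d_eq] : e0' / q ^+ d' = e0 / q ^+ d /\ d' = d.
  apply: geometric_string_unique b_neq0 q2_neq0 q2_nr _.
  by move=> a; split=> [/eigU/eigU'|/eigU'/eigU].
subst d'; have U'U i : (i <= d)%N -> U' i = U i.
  by move=> le_id; rewrite U_eig // U'_eig // b_eq.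
have e0_eq : e0' = e0 by apply: mulIf b_eq; rewrite invr_eq0 expf_neq0.
split=> //; have v_neq0 : vpick (U 0%N) != 0 by rewrite vpick0; case: decU => ->.
have v_U' : vpick (U 0%N) \in U' 0%N by rewrite U'U ?memv_pick.
have /weight_conditionP/(_ 0%N isT)[_ /subvP k1U] := wU.
have /weight_conditionP/(_ 0%N isT)[_ /subvP k1U'] := wU'.
have := leigenvalue_unique v_neq0 (k1U' _ v_U') (k1U _ (memv_pick _)).
by rewrite !divr1 => /mulIf; apply; rewrite expf_neq0.
Qed.

End WeightDecompositions.

Lemma leigenvector_shift (K : fieldType) (V : vectType K) (q mu : K) (h y : 'End(V)) v :
    q != 0 -> mu != 0 -> q *: y (h v) - q^-1 *: h (y v) = (q - q^-1) *: v ->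
    h v = mu *: v ->
  h (y v - mu^-1 *: v) = (mu * q ^+ 2) *: (y v - mu^-1 *: v).
Proof.
move=> q_neq0 mu_neq0 rel hv; rewrite hv linearZ /= in rel.
have hyv : h (y v) = (mu * q ^+ 2) *: y v - (q ^+ 2 - 1) *: v.
  rewrite -[h (y v)](scalerK (invr_neq0 q_neq0)) invrK.
  rewrite -[q^-1 *: _](subKr (q *: (mu *: y v))) rel scalerBr !scalerA.
  by congr (_ *: _ - _ *: _); field.
rewrite linearB linearZ /= hyv hv scalerA mulVf // scalerBr scalerA.
rewrite -addrA -opprD -scalerDl subrK.
by congr (_ - _ *: _); field.
Qed.

Section RaisingLowering.
Variables (K : fieldType) (q : K) (V : vectType K) (yp ym k kinv : bool -> 'End(V)).
Hypotheses (q_neq0 : q != 0) (q_nr : not_root_of_unity q).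
Hypothesis k_inv : forall i v, k i (kinv i v) = v /\ kinv i (k i v) = v.
Hypothesis yp_k :
  forall i v, (q - q^-1)^-1 *: (q *: yp i (k i v) - q^-1 *: k i (yp i v)) = v.
Hypothesis k_ym :
  forall i v, (q - q^-1)^-1 *: (q *: k i (ym i v) - q^-1 *: ym i (k i v)) = v.
Let q2_neq0 : q ^+ 2 != 0 := expf_neq0 2 q_neq0.
Let q2_nr : not_root_of_unity (q ^+ 2) := not_root_of_unityX (n := 2) isT q_nr.

Lemma k_not_leigenvalue0 i : ~~ leigenvalue (k i) 0.
Proof.
rewrite negbK -subv0; apply/subvP => v; rewrite mem_leigenspace scale0r memv0 => /eqP kv0.
by rewrite -[v](proj2 (k_inv i v)) kv0 linear0.
Qed.

Lemma kinv_eigen i mu v : k i v = mu *: v -> mu != 0 -> kinv i v = mu^-1 *: v.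
Proof.
move=> kv mu_neq0; rewrite -[in LHS](scalerK mu_neq0 v) linearZ /= -kv.
by rewrite (proj2 (k_inv i v)).
Qed.

Lemma k_yp_eigen i mu v : k i v = mu *: v -> mu != 0 ->
  k i (yp i v - mu^-1 *: v) = (mu * q ^+ 2) *: (yp i v - mu^-1 *: v).
Proof.
move=> kv mu_neq0; apply: leigenvector_shift => //.
by rewrite -[in RHS](yp_k i v) scalerA mulfV ?scale1r // subr_invr_neq0.
Qed.

Lemma k_ym_eigen i mu v : k i v = mu *: v -> mu != 0 ->
  k i (ym i v - mu^-1 *: v) = (mu / q ^+ 2) *: (ym i v - mu^-1 *: v).
Proof.
(* The relation between y^-_i and k_i is the one between y^+_i and k_i at q^-1. *)
move=> kv mu_neq0; rewrite -exprVn; apply: leigenvector_shift; rewrite ?invr_eq0 //.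
rewrite invrK -opprB -[in RHS](k_ym i v) scalerA -[q^-1 - q]opprB mulNr.
by rewrite mulfV ?scaleN1r // subr_invr_neq0.
Qed.

Section CentralElement.
Variable c : K.
Hypothesis k0k1 : forall v, k false (k true v) = c *: v.

Lemma k1_of_k0 mu v : k false v = mu *: v -> mu != 0 -> k true v = (c / mu) *: v.
Proof.
move=> kv mu_neq0; rewrite -[k true v](proj2 (k_inv false _)) k0k1 linearZ /=.
by rewrite (kinv_eigen kv mu_neq0) scalerA.
Qed.

Lemma k0_of_k1 nu v : k true v = nu *: v -> nu != 0 -> k false v = (c / nu) *: v.
Proof.
move=> kv nu_neq0; have := k0k1 v; rewrite kv linearZ /= => nu_k0v.
by rewrite -[k false v](scalerK nu_neq0) nu_k0v scalerA mulrC.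
Qed.

Section WeightSpaces.
Variables (b : K) (d : nat).
Hypotheses (c_neq0 : c != 0) (b_neq0 : b != 0).
Hypothesis weights_eig : forall i, (i <= d)%N -> leigenvalue (k false) (b * (q ^+ 2) ^+ i).
Hypothesis bottom : ~~ leigenvalue (k false) (b / q ^+ 2).
Hypothesis top : ~~ leigenvalue (k false) (b * (q ^+ 2) ^+ d.+1).

Local Notation U := (weight_space q (k false) b).

Lemma mem_weight_space i v : (v \in U i) = (k false v == (b * (q ^+ 2) ^+ i) *: v).
Proof. exact: mem_leigenspace. Qed.

Lemma mem_Unext i w : (i <= d)%N ->
  k false w = (b * (q ^+ 2) ^+ i * q ^+ 2) *: w -> w \in Unext d U i.
Proof.
rewrite -mulrA -exprSr /Unext => le_id kw; case: ltnP => [_|le_di].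
  by rewrite mem_weight_space kw.
have di : i = d by apply/eqP; rewrite eqn_leq le_id.
suff -> : w = 0 by apply: mem0v.
by apply: (leigenvector_eq0 top); rewrite mem_leigenspace kw di.
Qed.

Lemma mem_Uprev i w : k false w = (b * (q ^+ 2) ^+ i / q ^+ 2) *: w -> w \in Uprev U i.
Proof.
case: i => [|i] /= kw; last by rewrite mem_weight_space kw exprSr mulrA mulfK ?expf_neq0.
suff -> : w = 0 by apply: mem0v.
by apply: (leigenvector_eq0 bottom); rewrite mem_leigenspace kw expr0 mulr1.
Qed.

Lemma weight_space_shift i v : (i <= d)%N -> v \in U i ->
  [/\ (b * q ^+ d) *: yp false v - q ^ (d%:Z - 2 * i%:Z) *: v \in Unext d U i,
      (c / (b * q ^+ d)) *: ym true v - q ^ (2 * i%:Z - d%:Z) *: v \in Unext d U i,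
      (b * q ^+ d) *: ym false v - q ^ (d%:Z - 2 * i%:Z) *: v \in Uprev U i &
      (c / (b * q ^+ d)) *: yp true v - q ^ (2 * i%:Z - d%:Z) *: v \in Uprev U i].
Proof.
move=> le_id; rewrite mem_weight_space; set mu := b * _ => /eqP k0v.
have mu_neq0 : mu != 0 by rewrite mulf_neq0 ?expf_neq0.
have nu_neq0 : c / mu != 0 by rewrite mulf_neq0 ?invr_eq0.
have k1v := k1_of_k0 k0v mu_neq0.
have -> : q ^ (d%:Z - 2 * i%:Z) = b * q ^+ d * mu^-1.
  by rewrite -PoszM expfzBn // exprM /mu; field; rewrite expf_neq0.
have -> : q ^ (2 * i%:Z - d%:Z) = c / (b * q ^+ d) * (c / mu)^-1.
  by rewrite -PoszM expfzBn // exprM /mu; field; rewrite !expf_neq0 ?b_neq0 ?c_neq0.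
have shift e a x (W : {vspace V}) : x - a^-1 *: v \in W -> e *: x - (e * a^-1) *: v \in W.
  by rewrite -scalerA -scalerBr; apply: memvZ.
split; apply: shift; [apply: mem_Unext => // | apply: mem_Unext => // | |].
- exact: k_yp_eigen.
- rewrite (k0_of_k1 (k_ym_eigen k1v nu_neq0)) ?mulf_neq0 ?invr_eq0 //.
  by congr (_ *: _); rewrite /mu; field; rewrite q_neq0 b_neq0 c_neq0 !expf_neq0.
- by apply: mem_Uprev; apply: k_ym_eigen.
- apply: mem_Uprev.
  rewrite (k0_of_k1 (k_yp_eigen k1v nu_neq0)) ?mulf_neq0 ?invr_eq0 ?expf_neq0 //.
  by congr (_ *: _); rewrite /mu; field; rewrite q_neq0 b_neq0 c_neq0 !expf_neq0.
Qed.

Lemma weight_spaces_sum_stable i v : v \in (\sum_(j < d.+1) U j)%VS ->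
  [/\ yp i v \in (\sum_(j < d.+1) U j)%VS, ym i v \in (\sum_(j < d.+1) U j)%VS,
      k i v \in (\sum_(j < d.+1) U j)%VS & kinv i v \in (\sum_(j < d.+1) U j)%VS].
Proof.
set W := (\sum_(j < d.+1) U j)%VS.
have UW j : (j <= d)%N -> (U j <= W)%VS.
  by move=> le_jd; apply: (sumv_sup (Ordinal (le_jd : (j < d.+1)%N))).
have UnextW j : (j <= d)%N -> (Unext d U j <= W)%VS.
  by rewrite /Unext; case: ltnP => [/UW|_ _]; rewrite ?sub0v.
have UprevW j : (j <= d)%N -> (Uprev U j <= W)%VS.
  by case: j => [|j] /= le_jd; rewrite ?sub0v // UW // ltnW.
have stable (g : 'End(V)) :
    (forall j u, (j <= d)%N -> u \in U j -> g u \in W) -> v \in W -> g v \in W.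
  move=> gUW /memv_sumP[vs Uvs ->]; rewrite linear_sum; apply: rpred_sum => j _.
  exact: gUW (ltn_ord j) (Uvs j isT).
have cancel_shift e a x u : e != 0 -> e *: x - a *: u \in W -> u \in W -> x \in W.
  move=> e_neq0 xW uW; rewrite -[x](scalerK e_neq0) memvZ //.
  by rewrite -(rpredBr _ (memvZ a uW)).
have e0_neq0 : b * q ^+ d != 0 by rewrite mulf_neq0 ?expf_neq0.
have e1_neq0 : c / (b * q ^+ d) != 0 by rewrite mulf_neq0 ?invr_eq0.
have mu_neq0 j : b * (q ^+ 2) ^+ j != 0 by rewrite mulf_neq0 ?expf_neq0.
have k0U j u : u \in U j -> k false u = (b * (q ^+ 2) ^+ j) *: u.
  by rewrite mem_weight_space => /eqP.
move=> Wv; split; apply: stable Wv => j u le_jd Uu; have uW := subvP (UW j le_jd) u Uu;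
  have [Wn0 Wn1 Wp0 Wp1] := weight_space_shift le_jd Uu; case: i.
- exact: cancel_shift e1_neq0 (subvP (UprevW j le_jd) _ Wp1) uW.
- exact: cancel_shift e0_neq0 (subvP (UnextW j le_jd) _ Wn0) uW.
- exact: cancel_shift e1_neq0 (subvP (UnextW j le_jd) _ Wn1) uW.
- exact: cancel_shift e0_neq0 (subvP (UprevW j le_jd) _ Wp0) uW.
- by rewrite (k1_of_k0 (k0U j u Uu)) ?memvZ.
- by rewrite (k0U j u Uu) memvZ.
- by rewrite (kinv_eigen (k1_of_k0 (k0U j u Uu) _)) ?memvZ // mulf_neq0 ?invr_eq0.
- by rewrite (kinv_eigen (k0U j u Uu)) ?memvZ.
Qed.

Lemma sum_weight_spaces_full :
  U_irreducible yp ym k kinv -> (\sum_(j < d.+1) U j)%VS = fullv.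
Proof.
case=> _ /(_ _ (fun i v => @weight_spaces_sum_stable i v)) [W0|//].
have := weights_eig (leq0n d); rewrite /leigenvalue -subv0 -W0.
by rewrite (sumv_sup ord0) ?subvv.
Qed.

Lemma weight_decomposition_exists : U_irreducible yp ym k kinv ->
  [/\ b * q ^+ d != 0, c / (b * q ^+ d) != 0, is_decomposition d U &
      weight_condition q k (b * q ^+ d) (c / (b * q ^+ d)) d U].
Proof.
move=> irr; have e0_neq0 : b * q ^+ d != 0 by rewrite mulf_neq0 ?expf_neq0.
split=> //; first by rewrite mulf_neq0 ?invr_eq0.
  split=> //; first exact: sum_weight_spaces_full.
  apply: directv_sum_leigenspace => i j eq_ij; apply: val_inj.
  exact: geometric_inj b_neq0 q2_neq0 q2_nr _ _ eq_ij.
apply/(weight_conditionP k q_neq0) => i le_id; rewrite mulfK ?expf_neq0 //.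
split; apply/subvP => v //; rewrite mem_weight_space mem_leigenspace => /eqP k0v.
rewrite (k1_of_k0 k0v) ?mulf_neq0 ?expf_neq0 //.
by apply/eqP; congr (_ *: _); field; rewrite b_neq0 !expf_neq0.
Qed.

End WeightSpaces.
End CentralElement.
End RaisingLowering.

Lemma k0k1_scalar (K : closedFieldType) (V : vectType K) (yp ym k kinv : bool -> 'End(V)) :
    (forall i v, k i (kinv i v) = v /\ kinv i (k i v) = v) ->
    (forall g, g \in [:: yp false; yp true; ym false; ym true;
                         k false; k true; kinv false; kinv true] ->
       forall v, k false (k true (g v)) = g (k false (k true v))) ->
    U_irreducible yp ym k kinv ->
  exists2 c, c != 0 & forall v, k false (k true v) = c *: v.
Proof.
move=> k_inv central [V_neq0 irr].
have [c kk] : exists c, forall v, (k false \o k true)%VF v = c *: v.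
  apply: lfun_scalar_of_trivial_leigenspaces V_neq0 _ => a; apply: irr => i v Ev.
  have stable g : g \in [:: yp false; yp true; ym false; ym true;
                          k false; k true; kinv false; kinv true] ->
      g v \in leigenspace (k false \o k true)%VF a.
    by move=> gen_g; apply: leigenspace_stable Ev => x; rewrite !comp_lfunE central.
  by split; apply: stable; case: i; rewrite !inE eqxx ?orbT.
exists c => [|v]; last by rewrite -comp_lfunE kk.
have v_neq0 : vpick {:V} != 0 by rewrite vpick0.
apply: contraNneq v_neq0 => c0; set v := vpick _.
have k1v0 : k true v = 0.
  rewrite -[k true v](proj2 (k_inv false _)) -[k false _]comp_lfunE kk c0.
  by rewrite scale0r linear0.
by rewrite -[v](proj2 (k_inv true v)) k1v0 linear0.
Qed.

Theorem lemma14p1 (K : closedFieldType) (q : K) (V : vectType K)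
  (yp ym k kinv : bool -> 'End(V)) :
  q != 0 -> not_root_of_unity q ->
  is_U_module q yp ym k kinv -> U_irreducible yp ym k kinv ->
  exists (e0 e1 : K) (d : nat) (U : nat -> {vspace V}),
    [/\ e0 != 0, e1 != 0, is_decomposition d U & weight_condition q k e0 e1 d U] /\
        (* uniqueness of e0, e1; U_0, ..., U_d *)
        (forall (e0' e1' : K) (d' : nat) (U' : nat -> {vspace V}),
           e0' != 0 -> e1' != 0 -> is_decomposition d' U' ->
           weight_condition q k e0' e1' d' U' ->
           [/\ e0' = e0, e1' = e1, d' = d & forall i, (i <= d)%N -> U' i = U i]) /\
        (* raising / lowering properties, with U_{-1} = U_{d+1} = 0 *)
        (forall i, (i <= d)%N -> forall v, v \in U i ->
           [/\ e0 *: yp false v - q ^ (d%:Z - 2 * (i%:Z)) *: v \in Unext d U i,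
               e1 *: ym true v - q ^ (2 * (i%:Z) - d%:Z) *: v \in Unext d U i,
               e0 *: ym false v - q ^ (d%:Z - 2 * (i%:Z)) *: v \in Uprev U i &
               e1 *: yp true v - q ^ (2 * (i%:Z) - d%:Z) *: v \in Uprev U i]).
Proof.
move=> q_neq0 q_nr [k_inv [central [yp_k [k_ym _]]]] irr.
have [c c_neq0 k0k1] := k0k1_scalar k_inv central irr.
have [b [d [b_neq0 weights_eig bottom top]]] := leigenvalue_maximal_string irr.1
  (k_not_leigenvalue0 k_inv false) (expf_neq0 2 q_neq0) (not_root_of_unityX (n := 2) isT q_nr).
have [e0_neq0 e1_neq0 decU wU] := weight_decomposition_exists q_neq0 q_nr k_inv yp_k k_ym
  k0k1 c_neq0 b_neq0 weights_eig bottom top irr.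
exists (b * q ^+ d), (c / (b * q ^+ d)), d, (weight_space q (k false) b).
split; first by split.
split=> [e0' e1' d' U' e0'_neq0 _ decU' wU'|i le_id v Uv].
  exact: (weight_decomposition_unique q_neq0 q_nr e0_neq0 decU wU e0'_neq0 decU' wU').
exact: (weight_space_shift q_neq0 q_nr k_inv yp_k k_ym k0k1 c_neq0 b_neq0 bottom top le_id Uv).
Qed.
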